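(* Let $(P,\preceq)$ be a locally finite meet semilattice, $S=\{x_1,\dots,x_n\}\subseteq P$ a finite meet closed set, and suppose $x_i\in S$ generates a double-chain set in $S$, with $\mathrm{meetcl}(C_S(x_i))\setminus C_S(x_i)=A_i\cup B_i$, $A_i\cap B_i=\emptyset$, $A_i,B_i$ chains. Let $x_a$ and $x_b$ be the top elements of $A_i$ and $B_i$ (if one chain is empty, $x_a=x_b$ is the top of the other). For $x_k\in A_i\cup B_i$ let $\eta(x_k)$ be the number of elements $z\in C_S(x_i)$ attached to $x_k$ (i.e. covering $x_k$ in $\mathrm{meetcl}(C_S(x_i))$). (I) If no element of $C_S(x_i)$ is attached to both chains, then $\mu_S(x_j,x_i)=1$ if $x_j=x_i$; $=-1$ if $x_j\in C_S(x_i)$; $=\eta(x_j)-1$ if $x_j\in\{x_a,x_b\}$ is maximal in $A_i\cup B_i$; $=\eta(x_j)$ if $x_j\in\{x_a,x_b\}$ is not maximal in $A_i\cup B_i$; $=\eta(x_j)$ if $x_j\in A_i\cup B_i$ is not maximal in $A_i\cup B_i$ and $x_j\ne x_a\wedge x_b$; $=\eta(x_j)+1$ if $x_a,x_b$ are incomparable and $x_j=x_a\wedge x_b\in A_i\cup B_i$; and $=0$ otherwise. (II) If exactly one element $x_p\in C_S(x_i)$ is attached to some $x_q\in A_i$ and to some $x_r\in B_i$, then $\mu_S(x_j,x_i)=1$ if $x_j=x_i$; $=-1$ if $x_j\in C_S(x_i)$; $=\eta(x_j)-1$ if $x_j=x_a$ or $x_j=x_b$; $=\eta(x_j)$ if $x_j\in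 A_i\cup B_i$ with $x_j\neq x_a$, $x_j\ne x_b$; and $=0$ otherwise.
   Context: $\mu_S$ is the Möbius function of the finite poset $(S,\preceq)$: $\mu_S(x,x)=1$ and $\mu_S(y,x)=-\sum_{y\prec w\preceq x,\ w\in S}\mu_S(w,x)$ for $y\prec x$, and $\mu_S(y,x)=0$ if $y\not\preceq x$. $C_S(x)$ is the set of elements of $S$ covered by $x$ in $S$; $\mathrm{meetcl}(C)$ is the set of all finite meets of elements of $C$. An element $x\in S$ generates a double-chain set in $S$ if $\mathrm{meetcl}(C_S(x))\setminus C_S(x)$ is a union of two disjoint (possibly empty) chains. An element $z\in C_S(x_i)$ is attached to $x_k\in A_i\cup B_i$ if $z$ covers $x_k$ in the poset $\mathrm{meetcl}(C_S(x_i))$; $z$ is attached to a chain if it is attached to some element of it. *)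

From HB Require Import structures.
From mathcomp Require Import all_boot all_order all_algebra.
Set Implicit Arguments. Unset Strict Implicit. Unset Printing Implicit Defensive.
Import Order.TTheory GRing.Theory Num.Theory.

Section Defs.
Context {d : Order.disp_t} {P : meetSemilatticeType d}.
Local Open Scope order_scope.

Definition locally_finite : Prop :=
  forall x y : P, exists s : seq P, forall z, x <= z -> z <= y -> z \in s.

Definition meet_closed_seq (S : seq P) : Prop :=
  {in S &, forall x y, x `&` y \in S}.

(* Möbius function mu_S of the finite poset (S, <=), by the recursion
   mu(x,x) = 1, mu(y,x) = - sum_{y < w <= x, w in S} mu(w,x) for y < x,
   mu(y,x) = 0 otherwise.  [n] is a fuel parameter; fuel [size S] is enough
   (any strict chain in S has fewer than [size S] steps). *)
Fixpoint mu_rec (S : seq P) (n : nat) (y x : P) : int :=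
  if y == x then 1%R
  else if y < x then
    (if n is n'.+1 then
       (- \sum_(w <- S | (y < w)%O && (w <= x)%O) mu_rec S n' w x)%R
     else 0%R)
  else 0%R.

Definition moebius (S : seq P) (y x : P) : int := mu_rec S (size S) y x.

Definition covby (T : seq P) (y z : P) : bool :=
  [&& y \in T, z \in T, y < z & ~~ has (fun w => (y < w) && (w < z)) T].

Definition cov_set (S : seq P) (x : P) : seq P :=
  [seq z <- S | covby S z x].

(* meetcl(C): the meets of all nonempty subfamilies of C *)
Definition meetcl (C : seq P) : seq P :=
  pmap (fun t : (size C).-tuple bool =>
          if mask t C is x :: s then Some (foldr Order.meet x s) else None)
       (enum {: (size C).-tuple bool}).

Definition attached (C : seq P) (z xk : P) : bool := covby (meetcl C) xk z.

Definition eta_att (C : seq P) (xk : P) : nat := count (fun z => attached C z xk) C.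

Definition is_chain (A : seq P) : Prop := {in A &, forall y z, y >=< z}.

Definition is_top (A : seq P) (y : P) : bool := (y \in A) && all (fun w => w <= y) A.

Definition maximal_in (T : seq P) (y : P) : bool :=
  (y \in T) && ~~ has (fun w => y < w) T.

Definition double_chain (S : seq P) (x : P) (A B : seq P) : Prop :=
  let C := cov_set S x in
  [/\ forall y, ((y \in meetcl C) && (y \notin C)) = ((y \in A) || (y \in B)),
      forall y, y \in A -> y \notin B,
      is_chain A & is_chain B].

End Defs.

(* mu_S(., x) is the unique function f with f x = 1 that vanishes off the
   strict down-set of x and sums to 0 over every interval [y, x] of S with
   y < x.  Write C = C_S(x) and D = meetcl(C) \ C = A ∪ B, and try
     f w = [w = x] - [w ∈ C] + [w ∈ D] (eta w + delta w).
   For y < x the interval sum is 1 - #{c ∈ C | y <= c} + Σ_{w ∈ D, y <= w}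
   (eta w + delta w).  If no element of D lies above y, exactly one cover lies
   above y and the sum vanishes.  Otherwise, counting the pairs (c, w) with c
   attached to w, Σ eta = Σ_{c ∈ C} #{w ∈ D | y <= w, c attached to w}, and a
   cover attached to a single element of D contributes exactly [y <= c]: a
   maximal element of meetcl(C) in [c ∧ w0, c) is attached to c.  In case (I)
   every cover is attached to a single element (two elements of the same
   chain are comparable), and it remains that delta sums to -1 above y: the
   maximal elements of D are the comparable top, or the two incomparable tops
   compensated by their meet.  In case (II) the exceptional cover x_p is
   attached to q ∈ A and r ∈ B, with x_p ∧ x_a = q and x_p ∧ x_b = r, and
   [y <= q] + [y <= r] + 1 = [y <= x_p] + [y <= x_a] + [y <= x_b]. *)

From HB Require Import structures.
From mathcomp Require Import all_boot all_order all_algebra.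
From mathcomp Require Import zify.
Import Order.TTheory GRing.Theory Num.Theory.
Set Implicit Arguments. Unset Strict Implicit. Unset Printing Implicit Defensive.
Local Open Scope order_scope.

Section SeqCount.
Variable T : eqType.
Implicit Types (s : seq T) (p q : pred T).

Lemma sub_count_ltn p q s z : subpred p q -> z \in s -> q z -> ~~ p z ->
  (count p s < count q s)%N.
Proof.
move=> pq zs qz pNz.
have -> : count q s = (count p s + count (predI (predC p) q) s)%N.
  rewrite -size_filter -(count_predC p (filter q s)) !count_filter; congr (_ + _)%N.
  by apply: eq_count => w /=; case pw: (p w); rewrite ?(pq _ pw).
by rewrite -addn1 leq_add2l -has_count; apply/hasP; exists z => //=; rewrite pNz.
Qed.

Lemma count_le1 p s : uniq s -> {in s &, forall a b, p a -> p b -> a = b} ->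
  (count p s <= 1)%N.
Proof.
move=> us pinj; rewrite -size_filter.
have [/hasP[a as_ pa]|/hasPn pN] := boolP (has p s); last first.
  by rewrite (eq_in_filter (a2 := pred0)) ?filter_pred0 // => w /pN /negbTE.
apply: (uniq_leq_size (s2 := [:: a])); first exact: filter_uniq.
by move=> w; rewrite mem_filter inE => /andP[pw ws]; rewrite (pinj w a).
Qed.

Lemma count_eq1_inj p s a b : uniq s -> count p s = 1%N ->
  a \in s -> b \in s -> p a -> p b -> a = b.
Proof.
move=> us c1 as_ bs pa pb; apply/eqP; apply: contraT => ab.
have := uniq_leq_size (s1 := [:: a; b]) (s2 := filter p s).
rewrite size_filter c1 /= !inE ab; apply=> // w.
by rewrite !inE mem_filter => /orP[]/eqP->; rewrite ?pa ?pb.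
Qed.

Lemma count_predI1 p s a : uniq s -> a \in s ->
  count (fun w => p w && (w == a)) s = p a.
Proof.
move=> us as_; rewrite (eq_count (a2 := fun w => p a && (w == a))); last first.
  by move=> w /=; case: eqP => [->|]; rewrite ?andbF.
by case: (p a); rewrite ?count_pred0 // count_uniq_mem ?as_.
Qed.

Lemma count_predI2 p s a b : uniq s -> a != b -> a \in s -> b \in s ->
  count (fun w => p w && ((w == a) || (w == b))) s = (p a + p b)%N.
Proof.
move=> us ab as_ bs; rewrite -(count_predI1 p us as_) -(count_predI1 p us bs).
rewrite -count_predUI (eq_count (a1 := predI _ _) (a2 := pred0)) ?count_pred0.
  by rewrite addn0; apply: eq_count => w /=; rewrite andb_orr.
move=> w /=; apply/negbTE; by apply: contra ab => /andP[/andP[_ /eqP <-] /andP[_ /eqP <-]].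
Qed.

Lemma sum_bool_count (I : Type) (s : seq I) (p q : pred I) :
  (\sum_(i <- s | p i) (q i : nat))%N = count (predI p q) s.
Proof. by rewrite -sum1_count big_mkcondr; apply: eq_bigr => i _; case: (q i). Qed.

Lemma sum_Posz (I : Type) (s : seq I) (p : pred I) (F : I -> nat) :
  (\sum_(i <- s | p i) Posz (F i))%R = Posz (\sum_(i <- s | p i) F i).
Proof. by rewrite (big_morph Posz PoszD (erefl 0%Z)). Qed.

End SeqCount.

Section PosetSeq.
Context {d : Order.disp_t} {T : porderType d}.

Lemma exists_maximal (s : seq T) (p : pred T) z : z \in s -> p z ->
  exists2 m, (m \in s) && p m & ~~ has (fun v => p v && (m < v)) s.
Proof.
have [n] := ubnP (count (fun v => p v && (z < v)) s).
elim: n z => // n IH z; rewrite ltnS => cz zs pz.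
have [/hasP[v vs /andP[pv zv]]|] := boolP (has (fun v => p v && (z < v)) s); last first.
  by exists z; rewrite ?zs.
apply: (IH v) => //; apply: leq_trans cz; apply: (sub_count_ltn (z := v)) => //=.
- by move=> u /andP[-> /(lt_trans zv)->].
- by rewrite pv.
- by rewrite ltxx andbF.
Qed.

End PosetSeq.

Section Semilattice.
Context {d : Order.disp_t} {P : meetSemilatticeType d}.
Implicit Types (C T : seq P) (x y z : P).

Lemma moebius_unique (S : seq P) x (f : P -> int) :
  f x = 1%R ->
  {in S, forall y, y != x -> ~~ (y < x) -> f y = 0%R} ->
  {in S, forall y, y < x -> f y = (- \sum_(w <- S | (y < w)%O && (w <= x)%O) f w)%R} ->
  {in S, forall y, moebius S y x = f y}.
Proof.
move=> fx f0 frec.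
suff mu_f n y : y \in S -> (count (fun w : P => (y < w)%O && (w <= x)%O) S < n)%N ->
    mu_rec S n y x = f y.
  move=> y yS; apply: mu_f => //; rewrite -count_predT.
  by apply: (sub_count_ltn (z := y)); rewrite ?ltxx.
elim: n y => // n IH y yS cy /=.
have [->|yx] := eqVneq y x; first by rewrite fx.
have [lt_yx|nlt] := boolP (y < x); last by rewrite f0.
rewrite (frec y yS lt_yx); congr (- _)%R; rewrite big_seq_cond [RHS]big_seq_cond.
apply: eq_bigr => w /andP[wS /andP[yw wx]]; apply: IH => //.
rewrite -ltnS; apply: leq_trans cy; apply: (sub_count_ltn (z := w)) => //=.
- by move=> u /andP[/(lt_trans yw) -> ->].
- by rewrite yw.
- by rewrite ltxx.
Qed.

Definition is_glb T y := forall z, (z <= y) = all (fun v => z <= v) T.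

Lemma is_glb_foldr h T : is_glb (h :: T) (foldr Order.meet h T).
Proof.
move=> z; elim: T => [|a T IH] /=; first by rewrite andbT.
by rewrite lexI IH /= andbCA.
Qed.

Lemma is_glb_unique T y y' : is_glb T y -> is_glb T y' -> y = y'.
Proof. by move=> gy gy'; apply/le_anti; rewrite gy' -gy lexx gy -gy' lexx. Qed.

Lemma meetcl_glb C y : y \in meetcl C ->
  exists h, exists2 T, all (mem C) (h :: T) & is_glb (h :: T) y.
Proof.
rewrite mem_pmap => /mapP[t _]; case E: (mask t C) => [|h T] // [->].
exists h, T; last exact: is_glb_foldr.
by apply/allP => v; rewrite -E => /mem_mask.
Qed.

Lemma glb_meetcl C T y : T != [::] -> all (mem C) T -> is_glb T y -> y \in meetcl C.
Proof.
move=> T0 TC gy; rewrite mem_pmap; apply/mapP.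
exists (map_tuple (mem T) (in_tuple C)); first by rewrite mem_enum.
rewrite /= -filter_mask; case E: (filter (mem T) C) => [|h s].
  case: T T0 TC gy E => // a T _ /andP[aC _] _ /eqP; rewrite -size_eq0 size_filter.
  by rewrite -leqn0 leqNgt -has_count; case/negP; apply/hasP; exists a; rewrite ?inE ?eqxx.
congr Some; apply: is_glb_unique (is_glb_foldr h s) => z; rewrite -E gy.
apply: eq_all_r => v; rewrite mem_filter andb_idr // => vT.
exact: (allP TC).
Qed.

Lemma meetcl_id C c : c \in C -> c \in meetcl C.
Proof.
move=> cC; apply: (glb_meetcl (T := [:: c])) => //=; first by rewrite cC.
by move=> z /=; rewrite andbT.
Qed.

Lemma meetcl_le C y : y \in meetcl C -> exists2 c, c \in C & y <= c.
Proof.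
case/meetcl_glb => h [T /andP[hC _] gy]; exists h => //.
by have := gy y; rewrite lexx => /esym/andP[].
Qed.

Lemma meetclI C y z : y \in meetcl C -> z \in meetcl C -> y `&` z \in meetcl C.
Proof.
case/meetcl_glb => h1 [T1 C1 g1]; case/meetcl_glb => h2 [T2 C2 g2].
apply: (glb_meetcl (T := (h1 :: T1) ++ (h2 :: T2))) => //; first by rewrite all_cat C1.
by move=> v; rewrite lexI g1 g2 all_cat.
Qed.

Lemma meetcl_sub (S : seq P) C : meet_closed_seq S -> {subset C <= S} ->
  {subset meetcl C <= S}.
Proof.
move=> mcS CS y /meetcl_glb[h [T TC gy]]; rewrite (is_glb_unique gy (is_glb_foldr h T)).
elim: T TC {gy} => [|a T IH] /=; first by rewrite andbT => /CS.
case/and3P=> hC aC TC; apply: mcS; [exact: CS | apply: IH; exact/andP].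
Qed.

Lemma maximal_in_top T t w : is_top T t -> maximal_in T w = (w == t).
Proof.
case/andP=> tT /allP Tt; apply/idP/eqP => [/andP[wT /hasPn wmax]|->].
  by move: (Tt w wT); rewrite le_eqVlt (negbTE (wmax t tT)) orbF => /eqP.
by rewrite /maximal_in tT; apply/hasPn => v /Tt/le_gtF ->.
Qed.

End Semilattice.

Section Covers.
Context {d : Order.disp_t} {P : meetSemilatticeType d}.
Variables (S : seq P) (x : P).
Hypotheses (uS : uniq S) (mcS : meet_closed_seq S) (xS : x \in S).

Local Notation C := (cov_set S x).
Local Notation M := (meetcl C).

Definition proper_meet w := (w \in M) && (w \notin C).

Lemma mem_cov_set c : (c \in C) = (c \in S) && covby S c x.
Proof. by rewrite mem_filter andbC. Qed.

Lemma cov_set_uniq : uniq C.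
Proof. exact: filter_uniq. Qed.

Lemma cov_set_sub : {subset C <= S}.
Proof. by move=> c; rewrite mem_cov_set => /andP[]. Qed.

Lemma cov_set_lt c : c \in C -> c < x.
Proof. by rewrite mem_cov_set => /andP[_ /and4P[]]. Qed.

Lemma cov_set_eq c1 c2 : c1 \in C -> c2 \in C -> c1 <= c2 -> c1 = c2.
Proof.
move=> c1C c2C; rewrite le_eqVlt => /predU1P[//|lt12].
move: c1C; rewrite mem_cov_set => /andP[_ /and4P[_ _ _ /hasPn/(_ c2)]].
by rewrite lt12 cov_set_lt // cov_set_sub // => /(_ isT).
Qed.

Lemma cov_set_above y : y \in S -> y < x -> exists2 c, c \in C & y <= c.
Proof.
move=> yS yx; have [c /andP[cS /andP[yc cx]] cmax] :=
  exists_maximal (p := fun u => (y <= u) && (u < x)) yS (introT andP (conj (lexx y) yx)).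
exists c => //; rewrite mem_cov_set cS /covby cS xS cx /=; apply/hasPn => u u_S.
apply: contra cmax => /andP[cu ux]; apply/hasP; exists u => //.
by rewrite ux cu (le_trans yc (ltW cu)).
Qed.

Lemma meetcl_cov_sub : {subset M <= S}.
Proof. exact: meetcl_sub mcS cov_set_sub. Qed.

Lemma proper_meet_mem w : proper_meet w -> w \in S.
Proof. by case/andP => /meetcl_cov_sub. Qed.

Lemma meetcl_cov_lt w : w \in M -> w < x.
Proof. by case/meetcl_le => c /cov_set_lt cx wc; apply: le_lt_trans wc cx. Qed.

Lemma proper_meet_lt w : proper_meet w -> exists2 c, c \in C & w < c.
Proof.
case/andP => /meetcl_le[c cC wc] wC; exists c; rewrite // lt_neqAle wc andbT.
by apply: contraNneq wC => ->.
Qed.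

Lemma proper_meetW v w : proper_meet v -> w \in M -> w <= v -> proper_meet w.
Proof.
move=> /proper_meet_lt[c cC vc] wM wv; rewrite /proper_meet wM; apply/negP => wC.
have wc := le_lt_trans wv vc.
by move: (wc); rewrite (cov_set_eq wC cC (ltW wc)) ltxx.
Qed.

Lemma cov_meet_proper_lt c t : c \in C -> proper_meet t -> c `&` t < c.
Proof.
move=> cC Dt; rewrite lt_neqAle leIl andbT; apply: contraTneq Dt => ct.
have {ct}ct : c <= t by rewrite -ct leIr.
apply/negP => /proper_meet_lt[c' c'C tc']; have cc' := le_lt_trans ct tc'.
by move: (cc'); rewrite (cov_set_eq cC c'C (ltW cc')) ltxx.
Qed.

Lemma attached_lt c w : attached C c w -> [&& w \in M, c \in M & w < c].
Proof. by case/and4P => -> -> ->. Qed.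

Lemma attached_le_eq c w1 w2 : attached C c w1 -> attached C c w2 -> w1 <= w2 -> w1 = w2.
Proof.
move=> /and4P[_ _ _ /hasPn w1max] /and4P[w2M _ w2c _].
rewrite le_eqVlt => /predU1P[//|w12].
by have := w1max _ w2M; rewrite w12 w2c.
Qed.

Lemma attached_comparable_eq c w1 w2 :
  attached C c w1 -> attached C c w2 -> w1 >=< w2 -> w1 = w2.
Proof.
move=> a1 a2 /orP[]; first exact: attached_le_eq a1 a2.
by move=> w21; apply/esym; apply: attached_le_eq a2 a1 w21.
Qed.

Lemma exists_attached c y w0 : c \in C -> y <= c -> proper_meet w0 -> y <= w0 ->
  exists2 w, proper_meet w & (y <= w) && attached C c w.
Proof.
move=> cC yc Dw0 yw0; have cM := meetcl_id cC.
have vM : c `&` w0 \in M by apply: meetclI; case/andP: Dw0.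
have [m /andP[mM /andP[vm mc]] mmax] := exists_maximal (p := fun u => (c `&` w0 <= u) && (u < c))
  vM (introT andP (conj (lexx _) (cov_meet_proper_lt cC Dw0))).
exists m.
  rewrite /proper_meet mM; apply/negP => mC.
  by move: (mc); rewrite (cov_set_eq mC cC (ltW mc)) ltxx.
rewrite (le_trans _ vm) ?lexI ?yc //= /attached /covby mM cM mc /=.
apply/hasPn => u uM; apply: contra mmax => /andP[mu uc]; apply/hasP; exists u => //.
by rewrite uc (le_trans vm (ltW mu)) mu.
Qed.

Lemma cov_meet_attached c q t : c \in C -> attached C c q -> proper_meet t -> q <= t ->
  c `&` t = q.
Proof.
move=> cC cq Dt qt; have /and3P[qM _ qc] := attached_lt cq.
have ctM : c `&` t \in M by apply: meetclI (meetcl_id cC) _; case/andP: Dt.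
apply: esym (attached_le_eq cq _ _); last by rewrite lexI (ltW qc) qt.
rewrite /attached /covby ctM meetcl_id // cov_meet_proper_lt //=.
apply/hasPn => v vM; apply/negP => /andP[ctv vc].
case/and4P: cq => _ _ _ /hasPn/(_ v vM); rewrite vc andbT.
by rewrite (le_lt_trans _ ctv) // lexI (ltW qc) qt.
Qed.

Definition mu_ansatz (delta : P -> int) w : int :=
  (Posz (w == x) - Posz (w \in C)
   + (if proper_meet w then Posz (eta_att C w) + delta w else 0))%R.

Lemma mu_ansatz_top delta : mu_ansatz delta x = 1%R.
Proof.
have xC : (x \in C) = false by apply/negP => /cov_set_lt; rewrite ltxx.
have xD : proper_meet x = false by apply/negP => /andP[/meetcl_cov_lt]; rewrite ltxx.
by rewrite /mu_ansatz eqxx xC xD.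
Qed.

Lemma mu_ansatz_cov delta c : c \in C -> mu_ansatz delta c = (-1)%R.
Proof.
by move=> cC; rewrite /mu_ansatz cC /proper_meet cC andbF (lt_eqF (cov_set_lt cC)).
Qed.

Lemma mu_ansatz_proper delta w : w != x -> w \notin C ->
  mu_ansatz delta w = if proper_meet w then (Posz (eta_att C w) + delta w)%R else 0%R.
Proof. by move=> /negbTE wx /negbTE wC; rewrite /mu_ansatz wx wC sub0r oppr0 add0r. Qed.

Lemma count_cov_above_eq1 y : y \in S -> y < x ->
  ~~ has (fun w => proper_meet w && (y <= w)) S -> count (fun c => y <= c) C = 1%N.
Proof.
move=> yS yx /hasPn noD; apply/anti_leq/andP; split.
  apply: count_le1 cov_set_uniq _ => c1 c2 c1C c2C yc1 yc2.
  have c12M : c1 `&` c2 \in M by apply: meetclI; apply: meetcl_id.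
  have [c12C|c12N] := boolP (c1 `&` c2 \in C).
    by rewrite -(cov_set_eq c12C c1C (leIl _ _)) (cov_set_eq c12C c2C (leIr _ _)).
  by move: (noD _ (meetcl_cov_sub c12M)); rewrite /proper_meet c12M c12N lexI yc1 yc2.
by have [c cC yc] := cov_set_above yS yx; rewrite -has_count; apply/hasP; exists c.
Qed.

Lemma sum_mu_ansatz delta y : y < x ->
  (\sum_(w <- S | (y <= w)%O && (w <= x)%O) mu_ansatz delta w)%R =
  (1 - Posz (count (fun c => y <= c)%O C)
   + \sum_(w <- S | (y <= w)%O && proper_meet w) (Posz (eta_att C w) + delta w))%R.
Proof.
move=> yx; rewrite [LHS]big_split [in LHS]big_split /= sumrN !sum_Posz !sum_bool_count.
have -> : count (predI (fun w => (y <= w <= x)) (eq_op^~ x)) S = 1%N.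
  by rewrite (count_predI1 (fun w => y <= w <= x)) // lexx (ltW yx).
have -> : count (predI (fun w => (y <= w <= x)) (mem C)) S = count (fun c => y <= c) C.
  rewrite count_filter; apply: eq_in_count => w wS /=.
  rewrite mem_cov_set wS /=; case cov: (covby S w x); rewrite ?andbF //.
  by case/and4P: cov => _ _ /ltW -> _; rewrite !andbT.
congr (_ + _)%R; rewrite -big_mkcondr; apply: eq_bigl => w /=.
by case: (boolP (proper_meet w)) => [/andP[/meetcl_cov_lt/ltW ->]|]; rewrite ?andbT ?andbF.
Qed.

Lemma moebius_ansatz delta :
  (forall y, y \in S -> y < x -> has (fun w => proper_meet w && (y <= w)) S ->
     (\sum_(w <- S | (y <= w)%O && proper_meet w) (Posz (eta_att C w) + delta w))%R
       = (Posz (\sum_(c <- C) ((y <= c)%O : nat)) - 1)%R) ->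
  {in S, forall y, moebius S y x = mu_ansatz delta y}.
Proof.
move=> Hdelta; apply: (@moebius_unique _ _ S x (mu_ansatz delta)) => [|y _ yx nyx|y yS yx].
- exact: mu_ansatz_top.
- rewrite mu_ansatz_proper //; last by apply: contra nyx => /cov_set_lt.
  by rewrite ifF //; apply: contraNF nyx => /andP[/meetcl_cov_lt].
have sum0 : (\sum_(w <- S | (y <= w)%O && (w <= x)%O) mu_ansatz delta w)%R = 0%R.
  rewrite sum_mu_ansatz //; have [hasD|noD] := boolP (has (fun w => proper_meet w && (y <= w)) S).
    by rewrite Hdelta // sum_bool_count addrA subrK subrr.
  rewrite count_cov_above_eq1 // subrr add0r big_seq_cond big1 // => w /and3P[wS yw Dw].
  by move/hasPn: noD => /(_ w wS); rewrite Dw yw.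
move: sum0; rewrite big_mkcond (bigD1_seq y) //= lexx (ltW yx) /= -big_mkcondr.
move/eqP; rewrite addr_eq0 => /eqP ->; congr (- _)%R.
by apply: eq_bigl => w; rewrite lt_neqAle eq_sym andbA.
Qed.

Definition att_above y c := count (fun w => [&& y <= w, proper_meet w & attached C c w]) S.

Lemma sum_eta_att y :
  (\sum_(w <- S | (y <= w)%O && proper_meet w) eta_att C w)%N = (\sum_(c <- C) att_above y c)%N.
Proof.
rewrite (eq_bigr (fun w => \sum_(c <- C) (attached C c w : nat))%N) => [|w _]; last first.
  by rewrite /eta_att -sum1_count big_mkcond; apply: eq_bigr => c _; case: attached.
rewrite exchange_big /=; apply: eq_bigr => c _; rewrite sum_bool_count.
by apply: eq_count => w /=; rewrite andbA.
Qed.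

Lemma att_above_unique y c :
  c \in C ->
  (forall w1 w2, proper_meet w1 -> proper_meet w2 ->
     attached C c w1 -> attached C c w2 -> w1 = w2) ->
  has (fun w => proper_meet w && (y <= w)) S -> att_above y c = (y <= c).
Proof.
move=> cC uatt /hasP[w0 _ /andP[Dw0 yw0]]; have [yc|nyc] /= := boolP (y <= c).
  apply/anti_leq/andP; split.
    apply: count_le1 uS _ => w1 w2 _ _ /and3P[_ D1 a1] /and3P[_ D2 a2].
    exact: uatt _ _ D1 D2 a1 a2.
  have [w Dw /andP[yw aw]] := exists_attached cC yc Dw0 yw0.
  rewrite -has_count; apply/hasP; exists w; last by rewrite yw Dw.
  by apply: meetcl_cov_sub; case/andP: Dw.
apply/eqP; rewrite -leqn0 leqNgt -has_count; apply/hasPn => w _.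
apply: contra nyc => /and3P[yw _ /attached_lt/and3P[_ _ wc]].
exact: le_trans yw (ltW wc).
Qed.

End Covers.

Section DoubleChain.
Context {d : Order.disp_t} {P : meetSemilatticeType d}.
Variables (S : seq P) (x : P) (A B : seq P) (xa xb : P).
Hypotheses (uS : uniq S) (mcS : meet_closed_seq S) (xS : x \in S)
  (dcAB : double_chain S x A B)
  (topA : A != [::] -> is_top A xa) (topBa : A == [::] -> B != [::] -> is_top B xa)
  (topB : B != [::] -> is_top B xb) (topAb : B == [::] -> A != [::] -> is_top A xb).

Local Notation C := (cov_set S x).
Local Notation AB := (A ++ B).
Local Notation proper_meet := (proper_meet S x).
Local Notation att_both c :=
  (has (fun q => attached C c q) A && has (fun r => attached C c r) B).

Lemma proper_meetE w : proper_meet w = (w \in AB).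
Proof. by case: dcAB => DAB _ _ _; rewrite mem_cat -DAB. Qed.

Lemma top_A_mem : A != [::] -> xa \in A.
Proof. by case/topA/andP. Qed.

Lemma top_B_mem : B != [::] -> xb \in B.
Proof. by case/topB/andP. Qed.

Lemma le_top_A w : w \in A -> w <= xa.
Proof.
move=> wA; have /topA/andP[_ /allP leA] : A != [::] by case: (A) wA.
exact: leA.
Qed.

Lemma le_top_B w : w \in B -> w <= xb.
Proof.
move=> wB; have /topB/andP[_ /allP leB] : B != [::] by case: (B) wB.
exact: leB.
Qed.

Lemma le_tops w : proper_meet w -> (w <= xa) || (w <= xb).
Proof. by rewrite proper_meetE mem_cat => /orP[/le_top_A ->|/le_top_B ->]; rewrite ?orbT. Qed.

Lemma proper_top_A w : proper_meet w -> proper_meet xa.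
Proof.
rewrite !proper_meetE !mem_cat; have [/eqP A0|/top_A_mem -> //] := boolP (A == [::]).
rewrite A0 => wB; have B0 : B != [::] by case: (B) wB.
by case/andP: (topBa (introT eqP A0) B0).
Qed.

Lemma proper_top_B w : proper_meet w -> proper_meet xb.
Proof.
rewrite !proper_meetE !mem_cat; have [/eqP B0|/top_B_mem -> //] := boolP (B == [::]).
  rewrite B0 orbF => wA; have A0 : A != [::] by case: (A) wA.
  by case/andP: (topAb (introT eqP B0) A0) => ->.
by rewrite orbT.
Qed.

Lemma attached_unique c : ~~ att_both c ->
  forall w1 w2, proper_meet w1 -> proper_meet w2 ->
    attached C c w1 -> attached C c w2 -> w1 = w2.
Proof.
case: dcAB => _ _ chA chB nboth w1 w2; rewrite !proper_meetE !mem_cat.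
move=> /orP[w1A|w1B] /orP[w2A|w2B] a1 a2.
- exact: attached_comparable_eq a1 a2 (chA _ _ w1A w2A).
- by case/negP: nboth; apply/andP; split; apply/hasP; [exists w1|exists w2].
- by case/negP: nboth; apply/andP; split; apply/hasP; [exists w2|exists w1].
- exact: attached_comparable_eq a1 a2 (chB _ _ w1B w2B).
Qed.

Lemma maximal_AB w : maximal_in AB w -> (w == xa) || (w == xb).
Proof.
case/andP => wAB /hasPn wmax; move: (wAB); rewrite mem_cat => /orP[wA|wB].
  have xaA : xa \in A by apply: top_A_mem; case: (A) wA.
  have [//|wxa] := eqVneq w xa.
  by move: (wmax xa); rewrite mem_cat xaA lt_neqAle wxa (le_top_A wA) => /(_ isT).
have xbB : xb \in B by apply: top_B_mem; case: (B) wB.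
have [->|wxb] := eqVneq w xb; first by rewrite orbT.
by move: (wmax xb); rewrite mem_cat xbB orbT lt_neqAle wxb (le_top_B wB) => /(_ isT).
Qed.

Lemma proper_top_meet w : proper_meet w -> proper_meet (xa `&` xb).
Proof.
move=> Dw; have Da := proper_top_A Dw; have /andP[xaM _] := Da.
have /andP[xbM _] := proper_top_B Dw.
exact: proper_meetW Da (meetclI xaM xbM) (leIl _ _).
Qed.

Lemma incomparable_tops_mem w : proper_meet w -> ~~ (xa >=< xb) -> (xa \in A) && (xb \in B).
Proof.
move=> Dw; have [/eqP A0|A0] := boolP (A == [::]); have [/eqP B0|B0] := boolP (B == [::]).
- by move: Dw; rewrite proper_meetE A0 B0.
- have /andP[xaB _] := topBa (introT eqP A0) B0.
  by rewrite /Order.comparable (le_top_B xaB).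
- have /andP[xbA _] := topAb (introT eqP B0) A0.
  by rewrite /Order.comparable (le_top_A xbA) orbT.
- by rewrite top_A_mem ?top_B_mem.
Qed.

Lemma maximal_AB_comparable w0 w : proper_meet w0 -> xa >=< xb ->
  maximal_in AB w = (w == if xa <= xb then xb else xa).
Proof.
move=> Dw0 cab; apply: maximal_in_top; apply/andP; split.
  by rewrite -proper_meetE; case: ifP => _; [exact: proper_top_B Dw0 | exact: proper_top_A Dw0].
apply/allP => v; rewrite mem_cat => /orP[/le_top_A|/le_top_B] vt; case: ifP => ab.
- exact: le_trans vt ab.
- exact: vt.
- exact: vt.
- by apply: le_trans vt _; move: cab; rewrite /Order.comparable ab.
Qed.

Lemma maximal_AB_incomparable w0 w : proper_meet w0 -> ~~ (xa >=< xb) ->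
  maximal_in AB w = (w == xa) || (w == xb).
Proof.
move=> Dw0 ncab; have /andP[xaA xbB] := incomparable_tops_mem Dw0 ncab.
apply/idP/idP => [/maximal_AB //|/orP[]/eqP ->]; rewrite /maximal_in mem_cat ?xaA ?xbB ?orbT /=;
  apply/hasPn => v; rewrite mem_cat => /orP[/le_top_A|/le_top_B] vt; apply: contra ncab => lt.
- by move: (lt_le_trans lt vt); rewrite ltxx.
- by rewrite /Order.comparable (ltW (lt_le_trans lt vt)).
- by rewrite /Order.comparable (ltW (lt_le_trans lt vt)) orbT.
- by move: (lt_le_trans lt vt); rewrite ltxx.
Qed.

Definition deltaI w : int :=
  (- Posz (maximal_in AB w) + Posz (~~ (xa >=< xb)%O && (w == (xa `&` xb)%O)))%R.

Lemma sum_deltaI y w0 : proper_meet w0 -> y <= w0 ->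
  (\sum_(w <- S | (y <= w)%O && proper_meet w) deltaI w)%R = (-1)%R.
Proof.
move=> Dw0 yw0; have y_top : (y <= xa) || (y <= xb).
  by case/orP: (le_tops Dw0) => /(le_trans yw0) ->; rewrite ?orbT.
have Da := proper_top_A Dw0; have Db := proper_top_B Dw0.
rewrite /deltaI big_split sumrN /= !sum_Posz !sum_bool_count.
have [cab|ncab] := boolP (xa >=< xb).
  set t := if xa <= xb then xb else xa.
  have Dt : proper_meet t by rewrite /t; case: ifP.
  rewrite (eq_count (a1 := predI _ (fun w => ~~ true && (w == xa `&` xb))) (a2 := pred0)) => [|w];
    last by rewrite /= andbF.
  rewrite count_pred0 addr0.
  rewrite (eq_count (a2 := fun w => ((y <= w) && proper_meet w) && (w == t))) => [|w]; last first.
    by rewrite /= (maximal_AB_comparable w Dw0 cab).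
  rewrite (count_predI1 _ uS (proper_meet_mem mcS Dt)) Dt andbT; suff -> : y <= t by [].
  rewrite /t; case: ifP => ab; case/orP: y_top => yt //; first exact: le_trans yt ab.
  by move: cab; rewrite /Order.comparable ab => /(le_trans yt).
have /andP[xaA xbB] := incomparable_tops_mem Dw0 ncab.
have nab : xa != xb by apply: contraNneq ncab => ->; rewrite /Order.comparable lexx.
have Dab := proper_top_meet Dw0.
rewrite (eq_count (a2 := fun w => ((y <= w) && proper_meet w) && ((w == xa) || (w == xb))))
  => [|w]; last by rewrite /= (maximal_AB_incomparable w Dw0 ncab).
rewrite (eq_count (a1 := predI _ (fun w => ~~ false && (w == xa `&` xb)))
  (a2 := fun w => ((y <= w) && proper_meet w) && (w == xa `&` xb))) => [|w //].
rewrite (count_predI2 _ uS nab (proper_meet_mem mcS Da) (proper_meet_mem mcS Db)).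
rewrite (count_predI1 _ uS (proper_meet_mem mcS Dab)) Da Db Dab !andbT lexI.
by case/orP: y_top => ->; case: (y <= _)%O.
Qed.

Lemma moebius_caseI : ~~ has (fun c => att_both c) C ->
  {in S, forall y, moebius S y x = mu_ansatz S x deltaI y}.
Proof.
move=> /hasPn nboth; apply: (moebius_ansatz uS mcS xS) => y yS yx hasD.
have /hasP[w0 _ /andP[Dw0 yw0]] := hasD.
rewrite big_split /= sum_Posz sum_eta_att (sum_deltaI Dw0 yw0); congr (Posz _ - _)%R.
rewrite big_seq [RHS]big_seq; apply: eq_bigr => c cC.
exact: (att_above_unique uS mcS cC (attached_unique (nboth c cC)) hasD).
Qed.

Lemma mu_ansatz_deltaI w : mu_ansatz S x deltaI w =
  (if w == x then 1
   else if w \in C then -1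
   else if (w \in [:: xa; xb]) && maximal_in AB w then (eta_att C w)%:Z - 1
   else if [&& w \in [:: xa; xb], w \in AB & ~~ maximal_in AB w] then (eta_att C w)%:Z
   else if [&& w \in AB, ~~ maximal_in AB w & w != (xa `&` xb)%O] then (eta_att C w)%:Z
   else if [&& ~~ (xa >=< xb)%O, w == (xa `&` xb)%O & w \in AB] then (eta_att C w)%:Z + 1
   else 0)%R.
Proof.
have [->|wx] := eqVneq w x; first exact: mu_ansatz_top.
have [wC|wC] := boolP (w \in C); first exact: mu_ansatz_cov.
rewrite mu_ansatz_proper // proper_meetE; have [wAB|] /= := boolP (w \in AB); last first.
  by rewrite /maximal_in => /negbTE->; rewrite !andbF.
have top_meet : w == xa `&` xb -> (w \in [:: xa; xb]) = (xa >=< xb).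
  by move/eqP->; rewrite !inE eq_meetl eq_meetr.
have meetF : w \in [:: xa; xb] -> ~~ (xa >=< xb) && (w == xa `&` xb) = false.
  by move=> wtop; apply: contraTF wtop => /andP[ncab /top_meet ->].
rewrite /deltaI; have [wmax|wNmax] := boolP (maximal_in AB w).
  have wtop : w \in [:: xa; xb] by rewrite !inE maximal_AB.
  by rewrite wtop meetF //= addr0.
have [wtop|wNtop] := boolP (w \in [:: xa; xb]).
  by rewrite meetF //= oppr0 !addr0.
have [wm|wNm] /= := eqVneq w (xa `&` xb); last by rewrite andbF oppr0 !addr0.
have ncab : ~~ (xa >=< xb) by rewrite -(top_meet (introT eqP wm)).
by rewrite ncab oppr0 add0r.
Qed.

Definition deltaII w : int := (- Posz ((w == xa) || (w == xb)))%R.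

Section AttachedToBoth.
Variables (cp q r : P).
Hypotheses (cpC : cp \in C) (qA : q \in A) (rB : r \in B)
  (cpq : attached C cp q) (cpr : attached C cp r).

Let Dq : proper_meet q. Proof. by rewrite proper_meetE mem_cat qA. Qed.
Let Dr : proper_meet r. Proof. by rewrite proper_meetE mem_cat rB orbT. Qed.
Let xaA : xa \in A. Proof. by apply: top_A_mem; case: (A) qA. Qed.
Let xbB : xb \in B. Proof. by apply: top_B_mem; case: (B) rB. Qed.
Let cp_xa : cp `&` xa = q.
Proof. by apply: cov_meet_attached cpC cpq _ (le_top_A qA); rewrite proper_meetE mem_cat xaA. Qed.
Let cp_xb : cp `&` xb = r.
Proof.
by apply: cov_meet_attached cpC cpr _ (le_top_B rB); rewrite proper_meetE mem_cat xbB orbT.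
Qed.

Let q_neq_r : q != r.
Proof. by case: dcAB => _ disjAB _ _; apply: contraTneq rB => <-; exact: disjAB. Qed.

Lemma le_cov_of_le_tops y : y <= xa -> y <= xb -> y <= cp.
Proof.
move=> ya yb; case: dcAB => _ disjAB chA chB.
have ym : y <= xa `&` xb by rewrite lexI ya yb.
have /and3P[_ _ qcp] := attached_lt cpq; have /and3P[_ _ rcp] := attached_lt cpr.
have := proper_top_meet Dq; rewrite proper_meetE mem_cat => /orP[mA|mB].
  case/orP: (chA _ _ mA qA) => [mq|qm]; first exact: le_trans ym (le_trans mq (ltW qcp)).
  have qr : q <= r by rewrite -cp_xb lexI (ltW qcp) (le_trans qm (leIr _ _)).
  by move: q_neq_r; rewrite (attached_le_eq cpq cpr qr) eqxx.
case/orP: (chB _ _ mB rB) => [mr|rm]; first exact: le_trans ym (le_trans mr (ltW rcp)).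
have rq : r <= q by rewrite -cp_xa lexI (ltW rcp) (le_trans rm (leIl _ _)).
by move: q_neq_r; rewrite (attached_le_eq cpr cpq rq) eqxx.
Qed.

Lemma att_above_cp y : att_above S x y cp = ((y <= q)%O + (y <= r)%O)%N.
Proof.
case: dcAB => _ _ chA chB.
rewrite -(count_predI2 (fun w => y <= w) uS q_neq_r (proper_meet_mem mcS Dq)
  (proper_meet_mem mcS Dr)).
apply: eq_count => w /=; congr andb; apply/andP/idP => [[Dw cpw]|/orP[]/eqP->//].
move: Dw; rewrite proper_meetE mem_cat => /orP[wA|wB].
  by rewrite (attached_comparable_eq cpw cpq (chA _ _ wA qA)) eqxx.
by rewrite (attached_comparable_eq cpw cpr (chB _ _ wB rB)) eqxx orbT.
Qed.

(* If y <= cp both sides agree term by term, since cp ∧ xa = q and cp ∧ xb = r;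
   otherwise y lies below exactly one of the tops. *)
Lemma att_above_cp_tops y w0 : proper_meet w0 -> y <= w0 ->
  ((y <= q)%O + (y <= r)%O + 1 = (y <= cp)%O + (y <= xa)%O + (y <= xb)%O)%N.
Proof.
move=> Dw0 yw0; have [ycp|ycp] := boolP (y <= cp).
  by rewrite -cp_xa -cp_xb !lexI ycp /= addnC addnA.
have /and3P[_ _ qcp] := attached_lt cpq; have /and3P[_ _ rcp] := attached_lt cpr.
have -> : (y <= q) = false by apply: contraNF ycp => /le_trans; apply; exact: ltW.
have -> : (y <= r) = false by apply: contraNF ycp => /le_trans; apply; exact: ltW.
have y_top : (y <= xa) || (y <= xb).
  by case/orP: (le_tops Dw0) => /(le_trans yw0) ->; rewrite ?orbT.
have := @le_cov_of_le_tops y; rewrite (negbTE ycp).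
by case: (y <= xa) y_top; case: (y <= xb) => //= _ /(_ isT isT).
Qed.

Hypothesis cp_only : forall c, c \in C -> att_both c -> c = cp.

Lemma moebius_attached_to_both : {in S, forall y, moebius S y x = mu_ansatz S x deltaII y}.
Proof.
apply: (moebius_ansatz uS mcS xS) => y yS yx hasD.
have /hasP[w0 _ /andP[Dw0 yw0]] := hasD.
have xa_neq_xb : xa != xb.
  by case: dcAB => _ disjAB _ _; apply: contraTneq xbB => <-; exact: disjAB.
have Da : proper_meet xa by rewrite proper_meetE mem_cat xaA.
have Db : proper_meet xb by rewrite proper_meetE mem_cat xbB orbT.
rewrite big_split /= sum_Posz sum_eta_att /deltaII sumrN sum_Posz sum_bool_count.
rewrite (count_predI2 (fun w => (y <= w) && proper_meet w) uS xa_neq_xb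
  (proper_meet_mem mcS Da) (proper_meet_mem mcS Db)) Da Db !andbT.
rewrite !(bigD1_seq cp cpC (cov_set_uniq x uS)) /=.
rewrite att_above_cp [in LHS]big_seq_cond [in RHS]big_seq_cond.
rewrite (eq_bigr (fun c => (y <= c)%O : nat)) => [|c /andP[cC cNcp]]; last first.
  apply: (att_above_unique uS mcS cC) hasD => w1 w2; apply: attached_unique.
  by apply: contra cNcp => /(cp_only cC) ->.
have := att_above_cp_tops Dw0 yw0.
set R := (\sum_(c <- C | _) _)%N; clearbody R; clear; lia.
Qed.

End AttachedToBoth.

Lemma moebius_caseII : count (fun c => att_both c) C = 1%N ->
  {in S, forall y, moebius S y x = mu_ansatz S x deltaII y}.
Proof.
move=> one_both; have /hasP[cp cpC both_cp] : has (fun c => att_both c) C.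
  by rewrite has_count one_both.
have /andP[/hasP[q qA cpq] /hasP[r rB cpr]] := both_cp.
apply: (moebius_attached_to_both cpC qA rB cpq cpr) => c cC both_c.
exact: (count_eq1_inj (cov_set_uniq x uS) one_both cC cpC both_c both_cp).
Qed.

Lemma mu_ansatz_deltaII w : mu_ansatz S x deltaII w =
  (if w == x then 1
   else if w \in C then -1
   else if (w \in AB) && ((w == xa) || (w == xb)) then (eta_att C w)%:Z - 1
   else if [&& w \in AB, w != xa & w != xb] then (eta_att C w)%:Z
   else 0)%R.
Proof.
have [->|wx] := eqVneq w x; first exact: mu_ansatz_top.
have [wC|wC] := boolP (w \in C); first exact: mu_ansatz_cov.
rewrite mu_ansatz_proper // proper_meetE /deltaII; case: (w \in AB) => //=.
by rewrite -negb_or; case: (_ || _); rewrite /= ?oppr0 ?addr0.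
Qed.

End DoubleChain.

Theorem theorem3p1 (d : Order.disp_t) (P : meetSemilatticeType d)
  (S : seq P) (xi : P) (A B : seq P) (xa xb : P) :
  locally_finite (P := P) ->
  uniq S -> meet_closed_seq S ->
  xi \in S ->
  double_chain S xi A B ->
  (A != [::] -> is_top A xa) -> (A == [::] -> B != [::] -> is_top B xa) ->
  (B != [::] -> is_top B xb) -> (B == [::] -> A != [::] -> is_top A xb) ->
  let C := cov_set S xi in
  let AB := A ++ B in
  let att_both := fun z => has (fun q => attached C z q) A && has (fun r => attached C z r) B in
  (~~ has att_both C ->
   forall xj, xj \in S ->
   moebius S xj xi =
     (if xj == xi then 1
      else if xj \in C then -1
      else if (xj \in [:: xa; xb]) && maximal_in AB xj then (eta_att C xj)%:Z - 1
      else if [&& xj \in [:: xa; xb], xj \in AB & ~~ maximal_in AB xj] then (eta_att C xj)%:Z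
      else if [&& xj \in AB, ~~ maximal_in AB xj & xj != (xa `&` xb)%O] then (eta_att C xj)%:Z
      else if [&& ~~ (xa >=< xb)%O, xj == (xa `&` xb)%O & xj \in AB] then (eta_att C xj)%:Z + 1
      else 0)%R) /\
  (count att_both C = 1%N ->
   forall xj, xj \in S ->
   moebius S xj xi =
     (if xj == xi then 1
      else if xj \in C then -1
      else if (xj \in AB) && ((xj == xa) || (xj == xb)) then (eta_att C xj)%:Z - 1
      else if [&& xj \in AB, xj != xa & xj != xb] then (eta_att C xj)%:Z
      else 0)%R).
Proof.
(* [S] is finite. *)
move=> _ uS mcS xS dcAB topA topBa topB topAb /=.
split=> [no_both | one_both] xj xjS.
- rewrite (moebius_caseI uS mcS xS dcAB topA topBa topB topAb no_both xjS).
  exact (mu_ansatz_deltaI dcAB topA topB xj).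
- rewrite (moebius_caseII uS mcS xS dcAB topA topBa topB topAb one_both xjS).
  exact (mu_ansatz_deltaII xa xb dcAB xj).
Qed.
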